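(* Let $\mathit{pts}_1,\ldots,\mathit{pts}_n \in \mathit{PTS}$ be points-to types and let $q_1,\ldots,q_n \in [0,1]$ satisfy $q_1+\cdots+q_n \le 1$. Then the map $\nabla((\mathit{pts}_1,q_1),\ldots,(\mathit{pts}_n,q_n)) : \mathit{Var} \to 2^{\mathit{Addrs}_p}$ is a points-to type, i.e. it belongs to $\mathit{PTS}$.
   Context: $\mathit{Var}$ is a finite set of program variables. $\mathit{Addrs}=\{x' \mid x\in\mathit{Var}\}$ is a set of symbolic addresses (one per variable) and $\mathit{Addrs}_p=\mathit{Addrs}\times[0,1]$. $\textit{Pre-PTS}$ is the set of maps $\mathit{pts}:\mathit{Var}\to 2^{\mathit{Addrs}_p}$ such that for all $x,y\in\mathit{Var}$, if $(y',p_1),(y',p_2)\in\mathit{pts}(x)$ then $p_1=p_2$. For $\mathit{pts}\in\textit{Pre-PTS}$ and $x\in\mathit{Var}$, $\sum_{\mathit{pts}} x=\sum_{(z',p)\in\mathit{pts}(x)} p$ and $A_{\mathit{pts}}(x)=\{z'\mid \exists p>0.\ (z',p)\in\mathit{pts}(x)\}$. The set of points-to types is $\mathit{PTS}=\{\mathit{pts}\in\textit{Pre-PTS}\mid \forall x\in\mathit{Var}.\ \sum_{\mathit{pts}} x\le 1\}$. For $\mathit{pts}_1,\ldots,\mathit{pts}_n\in\mathit{PTS}$ and weights $q_1,\ldots,q_n\in[0,1]$ with sum $\le 1$, the map $\nabla((\mathit{pts}_1,q_1),\ldots,(\mathit{pts}_n,q_n))$ is defined by $\nabla((\mathit{pts}_1,q_1),\ldots,(\mathit{pts}_n,q_n))(x)=\{(z',p)\mid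 (\exists i.\ z'\in A_{\mathit{pts}_i}(x))\wedge p=\sum_{k:\ (z',p_k)\in\mathit{pts}_k(x)} q_k\, p_k\}$. *)

From mathcomp Require Import all_boot all_order all_algebra.
From mathcomp Require Import all_classical all_reals.
Set Implicit Arguments. Unset Strict Implicit. Unset Printing Implicit Defensive.
Import Order.TTheory GRing.Theory Num.Theory.
Local Open Scope classical_set_scope.
Local Open Scope ring_scope.

(* Var is a finite type of program variables; the symbolic address x' of a
   variable x is represented by x itself, so Addrs = Var and
   Addrs_p = Var * [0,1] (elements (z, p) of Var * R with 0 <= p <= 1). *)

Definition pts_map (R : realType) (Var : finType) := Var -> set (Var * R).

Definition prePTS (R : realType) (Var : finType) (pts : pts_map R Var) : Prop :=
  (forall x zp, pts x zp -> 0 <= zp.2 <= 1) /\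
  (forall x y p1 p2, pts x (y, p1) -> pts x (y, p2) -> p1 = p2).

Definition sum_pts (R : realType) (Var : finType) (pts : pts_map R Var) (x : Var) : R :=
  \sum_(zp \in pts x) zp.2.

Definition A_pts (R : realType) (Var : finType) (pts : pts_map R Var) (x : Var) : set Var :=
  [set z | exists p, 0 < p /\ pts x (z, p)].

Definition PTS (R : realType) (Var : finType) (pts : pts_map R Var) : Prop :=
  prePTS pts /\ forall x, sum_pts pts x <= 1.

Definition nabla (R : realType) (Var : finType) (n : nat)
  (pts_ : 'I_n -> pts_map R Var) (q : 'I_n -> R) : pts_map R Var :=
  fun x => [set zp | (exists i, A_pts (pts_ i) x zp.1) /\
     zp.2 = \sum_(kp \in [set kp : 'I_n * R | pts_ kp.1 x (zp.1, kp.2)]) (q kp.1 * kp.2)].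

From mathcomp Require Import all_boot all_order all_algebra.
From mathcomp Require Import all_classical all_reals.
Import Order.TTheory GRing.Theory Num.Theory.
Local Open Scope classical_set_scope.
Local Open Scope ring_scope.

(* Each pts(x) is the graph of a partial function from addresses to
   probabilities, so a sum over pts(x) is a sum over all addresses of that
   function extended by 0.  In these terms nabla(...)(x) attaches to z at most
   sum_k q_k pts_k(x)(z), which lies in [0, sum_k q_k]; summing over z and
   exchanging the sums bounds its total mass by sum_k q_k (sum_z pts_k(x)(z)),
   hence by sum_k q_k <= 1. *)

Section FunctionalRelations.
Context {R : realType} {T : finType}.
Implicit Types (A : set (T * R)) (z : T).

Definition functional A := forall z p1 p2, A (z, p1) -> A (z, p2) -> p1 = p2.

(* The value 0 is returned when z is not related to anything. *)
Definition lookup A z : R := xget 0 [set p | A (z, p)].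

Lemma lookupE {A z p} : functional A -> A (z, p) -> lookup A z = p.
Proof.
move=> fA Azp; rewrite /lookup; case: xgetP => [p' _ Azp'|/(_ p)//].
exact: fA Azp' Azp.
Qed.

Lemma lookup_notin A z : ~ (exists p, A (z, p)) -> lookup A z = 0.
Proof. by move=> nAz; rewrite /lookup; case: xgetP => // p _ Azp; case: nAz; exists p. Qed.

Lemma fsbig_functional A (F : T * R -> R) : functional A ->
  \sum_(zp \in A) F zp = \sum_(z | `[< exists p, A (z, p) >]) F (z, lookup A z).
Proof.
move=> fA; set D := [set z | exists p, A (z, p)].
have graphA : A = (fun z => (z, lookup A z)) @` D.
  apply/seteqP; split => [[z p] Azp|_ [z [p Azp] <-]].
    by exists z; [exists p | rewrite (lookupE fA Azp)].
  by rewrite (lookupE fA Azp).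
rewrite [in LHS]graphA fsbig_image; last by move=> z1 z2 _ _ [].
have -> : \sum_(z | `[< exists p, A (z, p) >]) F (z, lookup A z) =
    \sum_(z <- enum T | `[< exists p, A (z, p) >]) F (z, lookup A z) by rewrite enumT.
rewrite (bigfs _ _ (P := fun z => `[< exists p, A (z, p) >])) ?enum_uniq //;
  last by move=> z _; rewrite mem_enum.
by apply: eq_fsbigl; apply/seteqP; split => z /=; rewrite asboolE.
Qed.

Lemma fsbig_lookup A (F : T * R -> R) : functional A -> (forall z, F (z, 0) = 0) ->
  \sum_(zp \in A) F zp = \sum_z F (z, lookup A z).
Proof.
move=> fA F0; rewrite fsbig_functional // big_mkcond /=; apply: eq_bigr => z _.
by case: asboolP => // nAz; rewrite lookup_notin.
Qed.

End FunctionalRelations.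

Section PointsTo.
Context {R : realType} {Var : finType}.
Implicit Types (pts : pts_map R Var) (x z : Var).

Lemma prePTS_functional {pts} : prePTS pts -> forall x, functional (pts x).
Proof. by case=> _ fpts x z; apply: fpts. Qed.

Lemma prePTS_lookup_bound {pts} : prePTS pts -> forall x z, 0 <= lookup (pts x) z <= 1.
Proof.
move=> ptsP x z; have [[p xzp]|nxz] := pselect (exists p, pts x (z, p)).
  by rewrite (lookupE (prePTS_functional ptsP x) xzp); apply: ptsP.1 _ _ xzp.
by rewrite lookup_notin // lexx ler01.
Qed.

Lemma sum_ptsE pts x : functional (pts x) -> sum_pts pts x = \sum_z lookup (pts x) z.
Proof. by move=> fpts; rewrite /sum_pts fsbig_lookup. Qed.

End PointsTo.

Section Nabla.
Variables (R : realType) (Var : finType) (n : nat).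
Variables (pts_ : 'I_n -> pts_map R Var) (q : 'I_n -> R).
Hypothesis pts_P : forall k, prePTS (pts_ k).
Hypothesis q_ge0 : forall k, 0 <= q k.
Implicit Types (x z : Var).

Definition nabla_weight x z := \sum_k q k * lookup (pts_ k x) z.

Lemma nablaE x : nabla pts_ q x =
  [set zp | (exists i, A_pts (pts_ i) x zp.1) /\ zp.2 = nabla_weight x zp.1].
Proof.
have inner z : \sum_(kp \in [set kp : 'I_n * R | pts_ kp.1 x (z, kp.2)]) (q kp.1 * kp.2)
    = nabla_weight x z.
  rewrite (fsbig_lookup _ (fun kp : 'I_n * R => q kp.1 * kp.2)) //.
    by move=> k; apply: (prePTS_functional (pts_P k)).
  by move=> k; rewrite mulr0.
by apply/seteqP; split => -[z p] [Az] /= eqp; split => //; rewrite eqp inner.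
Qed.

Lemma nabla_functional x : functional (nabla pts_ q x).
Proof. by rewrite nablaE => z p1 p2 /= [_ ->] [_ ->]. Qed.

Lemma nabla_weight_ge0 x z : 0 <= nabla_weight x z.
Proof.
apply: sumr_ge0 => k _; apply: mulr_ge0 => //.
by case/andP: (prePTS_lookup_bound (pts_P k) x z).
Qed.

Lemma nabla_weight_le x z : nabla_weight x z <= \sum_k q k.
Proof.
apply: ler_sum => k _; rewrite -[leRHS]mulr1 ler_wpM2l //.
by case/andP: (prePTS_lookup_bound (pts_P k) x z).
Qed.

Lemma lookup_nabla_le x z : lookup (nabla pts_ q x) z <= nabla_weight x z.
Proof.
have [[p xzp]|nxz] := pselect (exists p, nabla pts_ q x (z, p)).
  by rewrite (lookupE (nabla_functional x) xzp); move: xzp; rewrite nablaE => -[_] /= ->.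
by rewrite lookup_notin // nabla_weight_ge0.
Qed.

Lemma sum_pts_nabla_le x : (forall k, sum_pts (pts_ k) x <= 1) ->
  sum_pts (nabla pts_ q) x <= \sum_k q k.
Proof.
move=> sum_pts_le1; rewrite sum_ptsE; last exact: nabla_functional.
apply: (@le_trans _ _ (\sum_z nabla_weight x z)).
  by apply: ler_sum => z _; apply: lookup_nabla_le.
rewrite exchange_big /=; apply: ler_sum => k _.
rewrite -mulr_sumr ler_piMr // -sum_ptsE; first exact: sum_pts_le1.
exact: (prePTS_functional (pts_P k)).
Qed.

Lemma prePTS_nabla : \sum_k q k <= 1 -> prePTS (nabla pts_ q).
Proof.
move=> q_le1; split; last by move=> x z p1 p2; apply: nabla_functional.
move=> x [z p]; rewrite nablaE => -[_] /= ->.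
by rewrite nabla_weight_ge0 (le_trans (nabla_weight_le x z)).
Qed.

End Nabla.

Theorem lemma1 (R : realType) (Var : finType) (n : nat)
  (pts_ : 'I_n -> pts_map R Var) (q : 'I_n -> R) :
  (forall i, PTS (pts_ i)) ->
  (forall i, 0 <= q i <= 1) ->
  \sum_(i < n) q i <= 1 ->
  PTS (nabla pts_ q).
Proof.
move=> ptsP q01 q_le1; have q_ge0 k : 0 <= q k by case/andP: (q01 k).
have prePTS_pts k : prePTS (pts_ k) by case: (ptsP k).
split; first exact: prePTS_nabla.
move=> x; apply: le_trans q_le1; apply: sum_pts_nabla_le => // k.
by case: (ptsP k).
Qed.
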